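(* Let $R$ be the set of pairs $(\lambda,\mu)$ with $\lambda$ a triangular partition and $\mu$ a partition whose parts are nonnegative integers (zero parts allowed, counted in $\ell(\mu)$). Let $A_1$ be the set of pairs $(X,Y)$ with $X$ a partition into distinct positive parts, $Y$ a partition into nonnegative parts, and $a(Y)<s(X)$; let $A_2$ be the set of pairs $(X,Y)$ with $X$ a partition into distinct positive parts, $Y$ a nonempty triangular partition, and $a(Y)<s(X)$. For $(\lambda,\mu)\in R$ let $k=\min(\ell(\lambda),\ell(\mu))$, $p=\max(\ell(\lambda),\ell(\mu))$, $\nu=\lambda+\mu=(\nu_1,\dots,\nu_p)$, and set $\phi(\lambda,\mu)=((\nu_1,\dots,\nu_k),(\nu_{k+1},\dots,\nu_p))$. Then $\phi$ is a bijection from $R$ onto $A_1\sqcup A_2$ such that, writing $\phi(\lambda,\mu)=(X,Y)$: $|\lambda|+|\mu|=|X|+|Y|$; if $\ell(\lambda)\le\ell(\mu)$ then $(X,Y)\in A_1$, $\ell(X)=\ell(\lambda)$ and $\ell(X)+\ell(Y)=\ell(\mu)$; if $\ell(\lambda)>\ell(\mu)$ then $(X,Y)\in A_2$, $\ell(X)=\ell(\mu)$ and $\ell(X)+\ell(Y)=\ell(\lambda)$.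
   Context: A partition is a weakly decreasing finite sequence of integers; $\ell(A)$ is its number of parts, $|A|$ the sum of its parts, $a(A)$ its largest part and $s(A)$ its smallest part, with the conventions $a(\emptyset)=-\infty$... more precisely, the condition $a(Y)<s(X)$ is taken to hold vacuously when $X$ or $Y$ is empty. A triangular partition is $(n,n-1,\dots,1)$ for some $n\ge0$. For partitions $A=(A_1,A_2,\dots)$ and $B=(B_1,B_2,\dots)$, $A+B=(A_1+B_1,A_2+B_2,\dots)$ of length $\max(\ell(A),\ell(B))$, where missing parts are treated as $0$. *)

From mathcomp Require Import all_boot.
Set Implicit Arguments. Unset Strict Implicit. Unset Printing Implicit Defensive.

Definition is_partition (s : seq nat) : bool := sorted geq s.

Definition is_triangular (s : seq nat) : bool := s == rev (iota 1 (size s)).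

Definition is_distinct_pos (s : seq nat) : bool :=
  sorted gtn s && all (fun x => 0 < x) s.

(* a(Y) < s(X), vacuous if X or Y is empty; for decreasing sequences the
   largest part is the head and the smallest the last element *)
Definition a_lt_s (Y X : seq nat) : bool :=
  (X == [::]) || (Y == [::]) || (head 0 Y < last 0 X).

Fixpoint padd (A B : seq nat) : seq nat :=
  match A, B with
  | [::], _ => B
  | _, [::] => A
  | a :: A', b :: B' => (a + b) :: padd A' B'
  end.

Definition inR (lam mu : seq nat) : bool := is_triangular lam && is_partition mu.

Definition inA1 (X Y : seq nat) : bool :=
  [&& is_distinct_pos X, is_partition Y & a_lt_s Y X].

Definition inA2 (X Y : seq nat) : bool :=
  [&& is_distinct_pos X, is_triangular Y, Y != [::] & a_lt_s Y X].

Definition inA (z : (seq nat * seq nat) + (seq nat * seq nat)) : bool :=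
  match z with
  | inl (X, Y) => inA1 X Y
  | inr (X, Y) => inA2 X Y
  end.

Definition phi (lam mu : seq nat) : seq nat * seq nat :=
  let nu := padd lam mu in
  let k := minn (size lam) (size mu) in
  (take k nu, drop k nu).

Definition phiT (lam mu : seq nat) : (seq nat * seq nat) + (seq nat * seq nat) :=
  if size lam <= size mu then inl (phi lam mu) else inr (phi lam mu).

From mathcomp Require Import all_boot.
From mathcomp Require Import zify.

Set Implicit Arguments.
Unset Strict Implicit.

(* Write a triangular partition of length n as tri n = (n, n-1, ..., 1).  The
   whole argument rests on one formula: for nu = tri n + mu,
       nu_i = (n - i) + mu_i          (0-based indices).
   Since n - i strictly decreases while i < n and mu is weakly decreasing,
   nu_0 > nu_1 > ... > nu_(n-1) > 0, so the first min(n, l(mu)) parts form a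
   partition into distinct positive parts.  The remaining parts are the tail of
   mu when n <= l(mu), and the tail (n - l(mu), ..., 1) of tri n otherwise;
   in both cases they are smaller than the last part of the prefix.  Conversely, nu determines mu once n is
   known (injectivity), and for (X, Y) in A1 (resp. A2) the strict decrease of
   X above a(Y) guarantees X_i >= n - i for n = l(X) (resp. n = l(X) + l(Y)),
   so subtracting tri n from X produces the preimage (surjectivity). *)

Definition tri (n : nat) : seq nat := rev (iota 1 n).

Lemma tri_triangular n : is_triangular (tri n).
Proof. by rewrite /is_triangular size_rev size_iota. Qed.

Lemma size_tri n : size (tri n) = n.
Proof. by rewrite /tri size_rev size_iota. Qed.

Lemma nth_tri n i : nth 0 (tri n) i = n - i.
Proof.
rewrite /tri; case: (ltnP i n) => hi.
  by rewrite nth_rev ?size_iota // nth_iota; lia.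
by rewrite nth_default ?size_rev ?size_iota //; lia.
Qed.

Lemma triangular_nth s :
  (forall i, i < size s -> nth 0 s i = size s - i) -> is_triangular s.
Proof.
move=> hs; apply/eqP/(@eq_from_nth _ 0) => [|i hi]; first by rewrite size_tri.
by rewrite nth_tri hs.
Qed.

Lemma nth_padd A B i : nth 0 (padd A B) i = nth 0 A i + nth 0 B i.
Proof. by elim: A B i => [|a A IH] [|b B] [|i] //=; rewrite ?addn0. Qed.

Lemma size_padd A B : size (padd A B) = maxn (size A) (size B).
Proof.
elim: A B => [|a A IH] [|b B] //=; rewrite ?maxn0 ?max0n //.
by rewrite IH maxnSS.
Qed.

Lemma sumn_padd A B : sumn (padd A B) = sumn A + sumn B.
Proof. by elim: A B => [|a A IH] [|b B] //=; rewrite ?addn0 // IH; lia. Qed.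

Lemma nth_padd_tri n mu i : nth 0 (padd (tri n) mu) i = n - i + nth 0 mu i.
Proof. by rewrite nth_padd nth_tri. Qed.

Lemma partition_nth s i j : is_partition s -> i <= j -> nth 0 s j <= nth 0 s i.
Proof.
move=> hs; elim: j => [|j IH]; first by rewrite leqn0 => /eqP ->.
rewrite leq_eqVlt => /orP [/eqP -> //| hij].
apply: leq_trans (IH hij).
case: (ltnP j.+1 (size s)) => hj; first exact: (sortedP 0 hs j hj).
by rewrite (nth_default 0 hj).
Qed.

Lemma partition_cat A Y : is_partition A -> is_partition Y ->
  (0 < size A -> head 0 Y <= last 0 A) -> is_partition (A ++ Y).
Proof.
case: A => [|a A] // hA hY hjoin.
move: hA; rewrite /is_partition /= cat_path => -> /=.
by case: Y hY hjoin => [|y Y] //= -> /(_ isT) ->.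
Qed.

Lemma strict_decr_lower_bound c s : sorted gtn s ->
  (0 < size s -> c < last 0 s) ->
  forall i, i < size s -> c + (size s - i) <= nth 0 s i.
Proof.
elim: s => [|x s IH] //= hs hlast [|i] hi /=; last first.
  by apply: IH => //; [exact: path_sorted hs | case: s hs hlast hi].
case: s IH hs hlast {hi} => [|y s] IH /= hs hlast.
  by have := hlast isT; lia.
case/andP: hs => hxy hs; have := IH hs hlast 0 isT; move: hxy => /=; lia.
Qed.

Section Forward.

Variables (n : nat) (mu : seq nat).
Hypothesis mu_part : is_partition mu.

Let nu := padd (tri n) mu.

Lemma size_nu : size nu = maxn n (size mu).
Proof. by rewrite size_padd size_tri. Qed.

Lemma distinct_prefix k : k <= n -> k <= size nu -> is_distinct_pos (take k nu).
Proof.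
move=> hkn hk; apply/andP; split.
  apply/(sortedP 0) => i; rewrite size_takel // => hi.
  rewrite /= !nth_take ?nth_padd_tri; try lia.
  have := partition_nth mu_part (leqnSn i); lia.
apply/(all_nthP 0) => i; rewrite size_takel // => hi.
by rewrite nth_take // nth_padd_tri; lia.
Qed.

Lemma junction_prefix k : k <= n -> k <= size nu ->
  a_lt_s (drop k nu) (take k nu).
Proof.
move=> hkn hk; rewrite /a_lt_s; have [->|hk0] := posnP k; first by rewrite take0.
apply/orP; right; rewrite -nth0 nth_drop addn0 -nth_last size_takel //.
rewrite nth_take ?prednK // !nth_padd_tri.
have := partition_nth mu_part (leq_pred k); lia.
Qed.

Lemma phi_A1 X Y : n <= size mu -> phi (tri n) mu = (X, Y) ->
  [/\ inA1 X Y, size X = n & size X + size Y = size mu].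
Proof.
move=> hnm; rewrite /phi size_tri (minn_idPl hnm) -/nu => -[<- <-].
have hsz : size nu = size mu by rewrite size_nu; apply/maxn_idPr.
have hk : n <= size nu by rewrite hsz.
rewrite -size_cat cat_take_drop size_takel // hsz; split=> //.
apply/and3P; split; [exact: distinct_prefix | | exact: junction_prefix].
apply/(sortedP 0) => i; rewrite size_drop hsz => hi /=.
rewrite !nth_drop !nth_padd_tri addnS.
have := partition_nth mu_part (leqnSn (n + i)); lia.
Qed.

Lemma phi_A2 X Y : size mu < n -> phi (tri n) mu = (X, Y) ->
  [/\ inA2 X Y, size X = size mu & size X + size Y = n].
Proof.
move=> hmn; rewrite /phi size_tri (minn_idPr (ltnW hmn)) -/nu => -[<- <-].
have hsz : size nu = n by rewrite size_nu; apply/maxn_idPl/ltnW.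
have hk : size mu <= size nu by rewrite hsz ltnW.
rewrite -size_cat cat_take_drop size_takel // hsz; split=> //.
have hkn := ltnW hmn.
apply/and4P; split; [exact: distinct_prefix | | | exact: junction_prefix].
- apply: triangular_nth => i; rewrite size_drop hsz => hi.
  rewrite nth_drop nth_padd_tri (nth_default 0 (leq_addr i _)); lia.
- by rewrite -size_eq0 size_drop hsz subn_eq0 -ltnNge.
Qed.

End Forward.

Lemma inR_tri lam mu : inR lam mu -> lam = tri (size lam).
Proof. by case/andP=> /eqP. Qed.

Lemma phi_stats lam mu X Y : inR lam mu -> phi lam mu = (X, Y) ->
  [/\ sumn lam + sumn mu = sumn X + sumn Y,
      size lam <= size mu ->
        [/\ inA1 X Y, size X = size lam & size X + size Y = size mu]
    & size mu < size lam ->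
        [/\ inA2 X Y, size X = size mu & size X + size Y = size lam]].
Proof.
move=> hR; have /andP [_ hmu] := hR; rewrite (inR_tri hR) size_tri => hphi.
split.
- by move: hphi; rewrite /phi => -[<- <-]; rewrite -sumn_padd -sumn_cat cat_take_drop.
- by move=> h; exact: (phi_A1 hmu h hphi).
- by move=> h; exact: (phi_A2 hmu h hphi).
Qed.

Lemma padd_tri_inj n mu1 mu2 : size mu1 = size mu2 ->
  padd (tri n) mu1 = padd (tri n) mu2 -> mu1 = mu2.
Proof.
move=> hsz hnu; apply: (@eq_from_nth _ 0) => // i _.
by have /eqP := @nth_padd_tri n mu1 i; rewrite hnu nth_padd_tri eqn_add2l => /eqP.
Qed.

(* Injectivity: the image determines both lengths, hence lam and nu, hence mu. *)
Lemma phiT_inj lam1 mu1 lam2 mu2 : inR lam1 mu1 -> inR lam2 mu2 ->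
  phiT lam1 mu1 = phiT lam2 mu2 -> lam1 = lam2 /\ mu1 = mu2.
Proof.
move=> h1 h2 e12.
case E1: (phi lam1 mu1) => [X Y]; case E2: (phi lam2 mu2) => [X2 Y2].
have [_ a1 b1] := phi_stats h1 E1; have [_ a2 b2] := phi_stats h2 E2.
(* equal images have equal tags, and the tag tells how to read off the lengths *)
have [eXY hl hm] : [/\ (X, Y) = (X2, Y2), size lam1 = size lam2 & size mu1 = size mu2].
  move: e12; rewrite /phiT E1 E2.
  case: (leqP (size lam1) (size mu1)) => ha;
    case: (leqP (size lam2) (size mu2)) => hb // -[eX eY]; subst X2 Y2.
  - by case: (a1 ha) => _ <- <-; case: (a2 hb) => _ <- <-.
  - by case: (b1 ha) => _ <- <-; case: (b2 hb) => _ <- <-.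
have hlam1 := inR_tri h1; have hlam2 := inR_tri h2.
have hlam : lam1 = lam2 by rewrite hlam1 hlam2 hl.
split=> //; apply: (@padd_tri_inj (size lam1)) => //.
have hnu l m : padd l m = (phi l m).1 ++ (phi l m).2 by rewrite /phi cat_take_drop.
by rewrite -hlam1 hnu E1 eXY -E2 -hnu hlam.
Qed.

(* Inverse construction: the parts of X minus those of tri N (truncated at 0),
   over the length of X. *)
Definition unshift (N : nat) (X : seq nat) : seq nat :=
  mkseq (fun i => nth 0 X i - (N - i)) (size X).

Lemma size_unshift N X : size (unshift N X) = size X.
Proof. exact: size_mkseq. Qed.

Lemma unshift_partition N X : sorted gtn X ->
  (forall i, i < size X -> N - i <= nth 0 X i) -> is_partition (unshift N X).
Proof.
move=> hX hge; apply/(sortedP 0) => i; rewrite size_mkseq => hi.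
rewrite (nth_mkseq _ _ hi) (nth_mkseq _ _ (ltnW hi)) /=.
have := sortedP 0 hX i hi; have := hge i.+1 hi; rewrite /=; lia.
Qed.

Lemma padd_tri_unshift N X M Y : (forall i, i < size X -> N - i <= nth 0 X i) ->
  (forall j, N - (size X + j) + nth 0 M j = nth 0 Y j) ->
  size X + size Y = maxn N (size X + size M) ->
  padd (tri N) (unshift N X ++ M) = X ++ Y.
Proof.
move=> hge hY hsz; apply: (@eq_from_nth _ 0).
  by rewrite size_padd size_tri !size_cat size_unshift hsz.
move=> i _; rewrite nth_padd_tri !nth_cat size_unshift.
case: ltnP => hi; first by rewrite nth_mkseq //; have := hge i hi; lia.
by rewrite -hY subnKC.
Qed.

Lemma phi_tri_split n mu X Y : padd (tri n) mu = X ++ Y ->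
  size X = minn n (size mu) -> phi (tri n) mu = (X, Y).
Proof.
by move=> hnu hX; rewrite /phi size_tri -hX hnu take_size_cat ?drop_size_cat.
Qed.

Lemma phiT_onto_A1 X Y : inA1 X Y ->
  exists lam mu, inR lam mu /\ phiT lam mu = inl (X, Y).
Proof.
case/and3P=> /andP [hXs hXpos] hY hYX; set n := size X.
have hlast : 0 < n -> 0 < last 0 X.
  by move=> hn; rewrite -nth_last; apply: (all_nthP 0 hXpos); rewrite prednK.
have hge i : i < n -> n - i <= nth 0 X i.
  by move=> hi; have := strict_decr_lower_bound hXs hlast hi; lia.
have hmu : size (unshift n X ++ Y) = n + size Y by rewrite size_cat size_unshift.
exists (tri n), (unshift n X ++ Y); split.
- rewrite /inR tri_triangular /=; apply: partition_cat => //.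
    exact: unshift_partition.
  (* the junction: a(Y) < s(X) gives a(Y) <= X_(n-1) - 1 *)
  rewrite size_unshift => hn; have hpred := prednK hn.
  rewrite -nth_last size_unshift nth_mkseq; last by rewrite hpred.
  move: hYX; rewrite /a_lt_s -nth_last -/n; case/orP => [/orP [/eqP hX0|/eqP ->]|] //.
    by move: hn; rewrite /n hX0.
  by have := hge n.-1; rewrite hpred => /(_ (leqnn n)); lia.
- rewrite /phiT size_tri hmu leq_addr; congr inl; apply: phi_tri_split.
    apply: padd_tri_unshift => // [j|]; first by rewrite /n; lia.
    by rewrite (maxn_idPr (leq_addr _ _)).
  by rewrite hmu (minn_idPl (leq_addr _ _)).
Qed.

Lemma phiT_onto_A2 X Y : inA2 X Y ->
  exists lam mu, inR lam mu /\ phiT lam mu = inr (X, Y).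
Proof.
case/and4P=> /andP [hXs _] /eqP hYtri hY0 hYX; set m := size X; set t := size Y.
have hYt j : nth 0 Y j = t - j by rewrite {1}hYtri nth_tri.
have hlast : 0 < m -> t < last 0 X.
  move=> hm; move: hYX; rewrite /a_lt_s (negbTE hY0) -nth0 hYt subn0 orbF.
  by case/orP=> [/eqP hX0 | //]; move: hm; rewrite /m hX0.
have hge i : i < m -> m + t - i <= nth 0 X i.
  by move=> hi; have := strict_decr_lower_bound hXs hlast hi; lia.
have ht : 0 < t by rewrite lt0n size_eq0.
exists (tri (m + t)), (unshift (m + t) X); split.
  by rewrite /inR tri_triangular unshift_partition.
rewrite /phiT size_tri size_unshift ifN -?ltnNge -/m; last lia.
congr inr; apply: phi_tri_split; last by rewrite size_unshift (minn_idPr (leq_addr _ _)).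
rewrite -[unshift _ _]cats0; apply: padd_tri_unshift => // [j|].
  by rewrite nth_nil hYt; lia.
by rewrite addn0 (maxn_idPl (leq_addr _ _)).
Qed.

Theorem mainTheorem6 :
  [/\ (* phi maps R into A1 ⊔ A2 *)
      (forall lam mu : seq nat, inR lam mu -> inA (phiT lam mu)),
      (* injective on R *)
      (forall lam1 mu1 lam2 mu2 : seq nat, inR lam1 mu1 -> inR lam2 mu2 ->
         phiT lam1 mu1 = phiT lam2 mu2 -> lam1 = lam2 /\ mu1 = mu2),
      (* surjective onto A1 ⊔ A2 *)
      (forall z, inA z -> exists lam mu : seq nat, inR lam mu /\ phiT lam mu = z)
    & (* statistics *)
      (forall lam mu X Y : seq nat, inR lam mu -> phi lam mu = (X, Y) ->
         [/\ sumn lam + sumn mu = sumn X + sumn Y,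
             size lam <= size mu ->
               [/\ inA1 X Y, size X = size lam & size X + size Y = size mu]
           & size mu < size lam ->
               [/\ inA2 X Y, size X = size mu & size X + size Y = size lam]])].
Proof.
split; [| exact: phiT_inj | | exact: phi_stats].
- move=> lam mu hR; rewrite /phiT; case E: (phi lam mu) => [X Y].
  have [_ hA1 hA2] := phi_stats hR E.
  by case: leqP => h /=; [case: (hA1 h) | case: (hA2 h)].
- by case=> [[X Y] /phiT_onto_A1 | [X Y] /phiT_onto_A2].
Qed.
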